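(* Let $(\mathcal{P},\cdot)$ be a finite-dimensional simple admissible Poisson algebra which is not a nilalgebra. Then $\mathcal{P}$ has a unit element $1$ (with $1\cdot x=x\cdot 1=x$ for all $x$).
   Context: $\mathbb{K}$ is a field of characteristic different from $2$ and $3$. Associator: $A(X,Y,Z)=(X\cdot Y)\cdot Z-X\cdot(Y\cdot Z)$. An admissible Poisson algebra is a $\mathbb{K}$-vector space $\mathcal{P}$ with a bilinear product $\cdot$ satisfying $3A(X,Y,Z)=(X\cdot Z)\cdot Y+(Y\cdot Z)\cdot X-(Y\cdot X)\cdot Z-(Z\cdot X)\cdot Y$ for all $X,Y,Z$. $\mathcal{P}$ is simple if it has no two-sided ideals other than $\{0\}$ and $\mathcal{P}$, and $\mathcal{P}\cdot\mathcal{P}\neq\{0\}$. Powers: $X^1=X$, $X^{i+1}=X\cdot X^i$; $\mathcal{P}$ is a nilalgebra if every $X$ satisfies $X^r=0$ for some $r$. *)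

From HB Require Import structures.
From mathcomp Require Import all_boot all_order all_algebra.
Set Implicit Arguments. Unset Strict Implicit. Unset Printing Implicit Defensive.
Import GRing.Theory.
Local Open Scope ring_scope.

Section AdmPoisson.
Variables (K : fieldType) (V : vectType K) (mul : V -> V -> V).

Definition bilinear_prod : Prop :=
  (forall (a : K) (x y z : V), mul (a *: x + y) z = a *: mul x z + mul y z) /\
  (forall (a : K) (x y z : V), mul z (a *: x + y) = a *: mul z x + mul z y).

Definition assoc (x y z : V) : V := mul (mul x y) z - mul x (mul y z).

Definition admissible_poisson : Prop :=
  forall x y z : V,
    3%:R *: assoc x y z =
      mul (mul x z) y + mul (mul y z) x - mul (mul y x) z - mul (mul z x) y.

Definition two_sided_ideal (I : {vspace V}) : Prop :=
  forall x y : V, x \in I -> mul x y \in I /\ mul y x \in I.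

Definition simple_alg : Prop :=
  (forall I : {vspace V}, two_sided_ideal I -> I = 0%VS \/ I = fullv) /\
  (exists x y : V, mul x y != 0).

(* ppow x n = X^(n+1), with X^1 = X and X^(i+1) = X . X^i *)
Fixpoint ppow (x : V) (n : nat) : V :=
  match n with
  | O => x
  | S n' => mul x (ppow x n')
  end.

Definition nilalgebra : Prop := forall x : V, exists n : nat, ppow x n = 0.

Definition is_unit_element (e : V) : Prop :=
  forall x : V, mul e x = x /\ mul x e = x.

End AdmPoisson.

(* The symmetrised product x o y = (xy + yx)/2 of an admissible Poisson algebra
   is commutative and associative, the bracket {x, y} = (xy - yx)/2 is a
   derivation of it, and the powers of x for the two products coincide.  In the
   finite-dimensional associative algebra (P, o), a non-nilpotent x satisfies a
   relation x^(k+1) (1 - x u(x)) = 0 with u a polynomial, and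
   e = (x u(x))^(k+1) is then a nonzero idempotent.  Since {y, e} = {y, e o e}
   = 2 e o {y, e}, the bracket with e vanishes; hence e o P is a nonzero
   two-sided ideal for the original product, so e o P = P by simplicity, and e
   acts as the identity on e o P. *)

From HB Require Import structures.
From mathcomp Require Import all_boot all_order all_algebra.
From mathcomp Require Import ring.
From Stdlib Require Import Classical.
Set Implicit Arguments. Unset Strict Implicit. Unset Printing Implicit Defensive.
Import GRing.Theory.
Local Open Scope ring_scope.

Section BilinearProduct.
Variables (K : fieldType) (V : vectType K) (mul : V -> V -> V).
Hypothesis mul_bilinear : bilinear_prod mul.

Lemma mulDl x y z : mul (x + y) z = mul x z + mul y z.
Proof. by have := (proj1 mul_bilinear) 1 x y z; rewrite !scale1r. Qed.

Lemma mulDr x y z : mul z (x + y) = mul z x + mul z y.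
Proof. by have := (proj2 mul_bilinear) 1 x y z; rewrite !scale1r. Qed.

Lemma mul0l z : mul 0 z = 0.
Proof. by apply: (@addIr _ (mul 0 z)); rewrite -mulDl !add0r. Qed.

Lemma mul0r z : mul z 0 = 0.
Proof. by apply: (@addIr _ (mul z 0)); rewrite -mulDr !add0r. Qed.

Lemma mulZl a x z : mul (a *: x) z = a *: mul x z.
Proof. by have := (proj1 mul_bilinear) a x 0 z; rewrite !addr0 mul0l addr0. Qed.

Lemma mulZr a x z : mul z (a *: x) = a *: mul z x.
Proof. by have := (proj2 mul_bilinear) a x 0 z; rewrite !addr0 mul0r addr0. Qed.

Lemma mulNl x z : mul (- x) z = - mul x z.
Proof. by rewrite -scaleN1r mulZl scaleN1r. Qed.

Lemma mulNr x z : mul z (- x) = - mul z x.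
Proof. by rewrite -scaleN1r mulZr scaleN1r. Qed.

Lemma mul_suml z I (r : seq I) (P : pred I) (F : I -> V) :
  mul (\sum_(i <- r | P i) F i) z = \sum_(i <- r | P i) mul (F i) z.
Proof. exact: (big_morph (mul^~ z) (fun u v => mulDl u v z) (mul0l z)). Qed.

Lemma mul_sumr z I (r : seq I) (P : pred I) (F : I -> V) :
  mul z (\sum_(i <- r | P i) F i) = \sum_(i <- r | P i) mul z (F i).
Proof. exact: (big_morph (mul z) (fun u v => mulDr u v z) (mul0r z)). Qed.

End BilinearProduct.

Section PowerPolynomials.
Variables (K : fieldType) (V : vectType K) (mul : V -> V -> V).
Hypotheses (mul_bilinear : bilinear_prod mul) (mulA : associative mul).

(* [aeval x p] is x p(x) = sum_i p_i x^(i+1): without a unit element, a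
   polynomial in x denotes an element only after multiplication by x. *)
Definition aeval (x : V) (p : {poly K}) : V := \sum_(i < size p) p`_i *: ppow mul x i.

Lemma aeval_widen x n (p : {poly K}) :
  (size p <= n)%N -> aeval x p = \sum_(i < n) p`_i *: ppow mul x i.
Proof.
move=> le_p_n; rewrite /aeval (big_ord_widen n (fun i => p`_i *: ppow mul x i) le_p_n).
rewrite big_mkcond; apply: eq_bigr => i _; case: ltnP => // le_p_i.
by rewrite nth_default // scale0r.
Qed.

Fact aeval_is_linear x : linear (aeval x).
Proof.
move=> a p q; set n := maxn (size p) (size q).
have le_p : (size p <= n)%N by rewrite leq_maxl.
have le_q : (size q <= n)%N by rewrite leq_maxr.
have le_apq : (size (a *: p + q)%R <= n)%N.
  apply: leq_trans (size_polyD _ _) _; rewrite geq_max le_q andbT.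
  exact: leq_trans (size_scale_leq _ _) le_p.
rewrite (aeval_widen x le_p) (aeval_widen x le_q) (aeval_widen x le_apq).
rewrite scaler_sumr -big_split; apply: eq_bigr => i _.
by rewrite coefD coefZ scalerDl scalerA.
Qed.

HB.instance Definition _ x := GRing.isSemilinear.Build K {poly K} V _ (aeval x)
  (GRing.semilinear_linear (aeval_is_linear x)).

Lemma aevalXn x k : aeval x 'X^k = ppow mul x k.
Proof.
rewrite (aeval_widen x (eq_leq (size_polyXn _ k))) big_ord_recr /= coefXn eqxx scale1r.
by rewrite big1 ?add0r // => i _; rewrite coefXn (ltn_eqF (ltn_ord i)) scale0r.
Qed.

Lemma aevalXM x p : aeval x ('X * p) = mul x (aeval x p).
Proof.
have le_Xp : (size ('X * p)%R <= (size p).+1)%N.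
  by apply: leq_trans (size_polyMleq _ _) _; rewrite size_polyX.
rewrite (aeval_widen x le_Xp) big_ord_recl coefXM eqxx scale0r add0r.
rewrite /aeval (mul_sumr mul_bilinear); apply: eq_bigr => i _.
by rewrite coefXM /= (mulZr mul_bilinear).
Qed.

Lemma mul_ppow_aeval x i q : mul (ppow mul x i) (aeval x q) = aeval x ('X^(i.+1) * q).
Proof.
elim: i => [|i IHi]; first by rewrite expr1 aevalXM.
by rewrite /= -mulA IHi -aevalXM mulrA -exprS.
Qed.

Lemma aevalM x p q : mul (aeval x p) (aeval x q) = aeval x ('X * p * q).
Proof.
rewrite -[p in RHS]coefK poly_def mulr_sumr mulr_suml linear_sum /= (mul_suml mul_bilinear).
apply: eq_bigr => i _; rewrite (mulZl mul_bilinear) mul_ppow_aeval.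
by rewrite -scalerAr -scalerAl linearZ exprS.
Qed.

Lemma aevalMr_eq0 x p s : aeval x p = 0 -> aeval x (p * s) = 0.
Proof.
move=> p0; have Xnp0 j : aeval x ('X^j * p) = 0.
  by elim: j => [|j IHj]; rewrite ?expr0 ?mul1r // exprS -mulrA aevalXM IHj mul0r.
rewrite mulrC -[s]coefK poly_def mulr_suml linear_sum big1 // => i _.
by rewrite -scalerAl linearZ /= Xnp0 scaler0.
Qed.

Lemma aeval_kernel_neq0 x : exists2 q : {poly K}, q != 0 & aeval x q = 0.
Proof.
pose n := \dim (@fullv K V); pose T := [tuple ppow mul x i | i < n.+1].
have T_dep : ~ free T.
  by move=> /eqP dimT; have := dimvS (subvf <<T>>%VS); rewrite dimT size_tuple ltnn.
have [k [sumk0 [i ki_neq0]]] :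
    exists k : 'I_n.+1 -> K, \sum_(i < n.+1) k i *: T`_i = 0 /\ exists i, k i != 0.
  apply: NNPP => no_rel; apply/T_dep/freeP => k sumk0 i.
  by apply/eqP/negPn/negP => ki; apply: no_rel; exists k; split; last exists i.
exists (\poly_(j < n.+1) k (inord j)).
  apply: contra_neq ki_neq0 => /(congr1 (coefp i)) /=.
  by rewrite coef_poly ltn_ord inord_val coef0.
rewrite (aeval_widen x (size_poly _ _)) -[RHS]sumk0; apply: eq_bigr => j _.
by rewrite coef_poly ltn_ord inord_val nth_mktuple.
Qed.

Lemma aeval_kernel_Xn x : exists k (u : {poly K}), aeval x ('X^k * (1 - 'X * u)) = 0.
Proof.
have [q q_neq0 q0] := aeval_kernel_neq0 x.
have [k [r /implyP/(_ q_neq0) r0_neq0 def_q]] := multiplicity_XsubC q 0.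
have [t def_r] : exists t, r = t * 'X + (r.[0])%:P.
  have /factor_theorem[t] : root (r - (r.[0])%:P) 0 by rewrite rootE !hornerE subrr.
  by rewrite polyC0 subr0 => def_t; exists t; rewrite -def_t subrK.
move: r0_neq0; rewrite rootE; set c := r.[0] in def_r * => c_neq0.
have cVc : c^-1%:P * c%:P = 1 :> {poly K} by rewrite -polyCM mulVf.
exists k, (- c^-1 *: t).
suff -> : 'X^k * (1 - 'X * (- c^-1 *: t)) = c^-1 *: q.
  by rewrite linearZ /= q0 scaler0.
rewrite def_q def_r polyC0 subr0 -!mul_polyC.
by rewrite -[X in 'X^k * (X - _)]cVc; ring.
Qed.

Lemma idempotent_of_aeval_kernel x k u :
  aeval x ('X^k * (1 - 'X * u)) = 0 -> ppow mul x k != 0 ->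
  exists2 e, mul e e = e & e != 0.
Proof.
move=> ann xk_neq0; set f := 'X * u; set g := 'X^k * u ^+ k.+1.
have ann_pow : aeval x ('X^k * (1 - f ^+ k.+1)) = 0.
  have -> : 'X^k * (1 - f ^+ k.+1) = 'X^k * (1 - f) * \sum_(i < k.+1) f ^+ i.
    by rewrite -[1 - _]opprB subrX1; ring.
  exact: aevalMr_eq0.
have Xg : 'X * g = f ^+ k.+1 by rewrite /g /f exprMn mulrA -exprS.
exists (aeval x g).
  apply/eqP; rewrite aevalM -subr_eq0 -linearB /=.
  have -> : 'X * g * g - g = 'X^k * (1 - f ^+ k.+1) * - u ^+ k.+1.
    by rewrite Xg /g; ring.
  by rewrite aevalMr_eq0.
apply: contra_neq xk_neq0 => g0; rewrite -aevalXn.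
have -> : 'X^k = g * 'X^(k.+1) + 'X^k * (1 - f ^+ k.+1) by rewrite /g /f exprMn; ring.
by rewrite linearD /= aevalMr_eq0 // ann_pow addr0.
Qed.

Lemma idempotent_of_not_nilalgebra :
  ~ nilalgebra mul -> exists2 e, mul e e = e & e != 0.
Proof.
move=> not_nil; apply: NNPP => no_idem; apply: not_nil => x.
apply: NNPP => x_nonnil; have [k [u ann]] := aeval_kernel_Xn x.
apply: no_idem; apply: idempotent_of_aeval_kernel ann _.
by apply/eqP => xk0; apply: x_nonnil; exists k.
Qed.

End PowerPolynomials.

Lemma coord_vbasis_inj (K : fieldType) (V : vectType K) (u w : V) :
  (forall i, coord (vbasis fullv) i u = coord (vbasis fullv) i w) -> u = w.
Proof.
move=> eq_uw; rewrite (coord_vbasis (memvf u)) (coord_vbasis (memvf w)).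
by apply: eq_bigr => i _; rewrite eq_uw.
Qed.

Section AdmissiblePoisson.
Variables (K : fieldType) (V : vectType K) (mul : V -> V -> V).
Hypotheses (two_neq0 : (2%:R : K) != 0) (three_neq0 : (3%:R : K) != 0).
Hypotheses (mul_bilinear : bilinear_prod mul) (mul_admissible : admissible_poisson mul).

Lemma mul_mulr x y z : mul x (mul y z) =
  3%:R^-1 *: (3%:R *: mul (mul x y) z
    - (mul (mul x z) y + mul (mul y z) x - mul (mul y x) z - mul (mul z x) y)).
Proof.
by rewrite -mul_admissible /assoc scalerBr !scalerA mulVf // !scale1r opprB addrC subrK.
Qed.

Definition symprod x y := 2%:R^-1 *: (mul x y + mul y x).
Definition pbracket x y := 2%:R^-1 *: (mul x y - mul y x).

(* Both sides are linear combinations of left-normed products, so the identity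
   is checked coordinatewise as an identity of linear forms over [K]. *)
Local Ltac coord_field :=
  rewrite /symprod /pbracket ?(mulDl mul_bilinear, mulDr mul_bilinear,
    mulNl mul_bilinear, mulNr mul_bilinear, mulZl mul_bilinear, mulZr mul_bilinear)
    ?mul_mulr;
  apply: coord_vbasis_inj => ?; rewrite !linearE /=;
  by field; rewrite ?two_neq0 ?three_neq0.

Lemma mul_symprod_pbracket x y : mul x y = symprod x y + pbracket x y.
Proof. coord_field. Qed.

Lemma symprod_bilinear : bilinear_prod symprod.
Proof. by split=> a x y z; coord_field. Qed.

Lemma symprodC : commutative symprod.
Proof. by move=> x y; rewrite /symprod addrC. Qed.

Lemma symprodA : associative symprod.
Proof. move=> x y z; coord_field. Qed.

Lemma pbracketxx x : pbracket x x = 0.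
Proof. by rewrite /pbracket subrr scaler0. Qed.

Lemma pbracketC x y : pbracket x y = - pbracket y x.
Proof. by rewrite /pbracket -scalerN opprB. Qed.

Lemma pbracket_symprodr x y z :
  pbracket x (symprod y z) = symprod (pbracket x y) z + symprod y (pbracket x z).
Proof. coord_field. Qed.

Lemma pbracket_ppow x n : pbracket x (ppow symprod x n) = 0.
Proof.
elim: n => [|n IHn] /=; first exact: pbracketxx.
rewrite pbracket_symprodr pbracketxx IHn.
by rewrite (mul0l symprod_bilinear) (mul0r symprod_bilinear) addr0.
Qed.

Lemma ppow_symprod x n : ppow mul x n = ppow symprod x n.
Proof. by elim: n => //= n ->; rewrite mul_symprod_pbracket pbracket_ppow addr0. Qed.

Lemma symprod_idempotent_of_not_nilalgebra :
  ~ nilalgebra mul -> exists2 e, symprod e e = e & e != 0.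
Proof.
move=> not_nil; apply: idempotent_of_not_nilalgebra symprod_bilinear symprodA _.
move=> nil_symprod; apply: not_nil => x.
by have [n xn0] := nil_symprod x; exists n; rewrite ppow_symprod.
Qed.

Fact symprod_is_linear e : linear (symprod e).
Proof. by move=> a u v; rewrite (mulDr symprod_bilinear) (mulZr symprod_bilinear). Qed.

HB.instance Definition _ e := GRing.isSemilinear.Build K V V _ (symprod e)
  (GRing.semilinear_linear (symprod_is_linear e)).

Section Idempotent.
Variable e : V.
Hypothesis ee : symprod e e = e.

Lemma pbracket_idempotent y : pbracket y e = 0.
Proof.
set w := pbracket y e.
have w2 : w = symprod e w + symprod e w by rewrite {1}/w -{1}ee pbracket_symprodr symprodC.
have ew2 : symprod e w = symprod e w + symprod e w.
  by rewrite {1}w2 (mulDr symprod_bilinear) symprodA ee.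
have ew0 : symprod e w = 0 by apply: (addrI (symprod e w)); rewrite addr0 -ew2.
by rewrite w2 ew0 addr0.
Qed.

Lemma mul_idempotentl y : mul e y = symprod e y.
Proof. by rewrite mul_symprod_pbracket pbracketC pbracket_idempotent oppr0 addr0. Qed.

Lemma mul_idempotentr y : mul y e = symprod e y.
Proof. by rewrite mul_symprod_pbracket pbracket_idempotent addr0 symprodC. Qed.

Lemma pbracket_symprod_idempotent y u :
  pbracket y (symprod e u) = symprod e (pbracket y u).
Proof. by rewrite pbracket_symprodr pbracket_idempotent (mul0l symprod_bilinear) add0r. Qed.

Lemma mul_symprod_idempotentr y u : mul y (symprod e u) = symprod e (mul y u).
Proof.
rewrite !mul_symprod_pbracket pbracket_symprod_idempotent (mulDr symprod_bilinear).
by rewrite symprodA [symprod y e]symprodC -symprodA.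
Qed.

Lemma mul_symprod_idempotentl y u : mul (symprod e u) y = symprod e (mul u y).
Proof.
rewrite !mul_symprod_pbracket pbracketC pbracket_symprod_idempotent -symprodA.
by rewrite (mulDr symprod_bilinear) [pbracket u y]pbracketC (mulNr symprod_bilinear).
Qed.

Lemma symprod_idempotent_ideal : two_sided_ideal mul (limg (linfun (symprod e))).
Proof.
move=> _ y /memv_imgP[u _ ->]; rewrite lfunE /=.
rewrite mul_symprod_idempotentl mul_symprod_idempotentr.
by split; apply/memv_imgP; eexists; rewrite ?memvf ?lfunE.
Qed.

Lemma unit_of_simple_idempotent : e != 0 -> simple_alg mul -> is_unit_element mul e.
Proof.
move=> e_neq0 [simple_ideals _] v.
have [I0 | Ifull] := simple_ideals _ symprod_idempotent_ideal.
  have : e \in limg (linfun (symprod e)) by apply/memv_imgP; exists e; rewrite ?memvf ?lfunE.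
  by rewrite I0 memv0 (negPf e_neq0).
have /memv_imgP[u _ ->] : v \in limg (linfun (symprod e)) by rewrite Ifull memvf.
by rewrite lfunE /= mul_idempotentl mul_idempotentr symprodA ee.
Qed.

End Idempotent.

End AdmissiblePoisson.

Theorem mainTheorem11 (K : fieldType) (V : vectType K) (mul : V -> V -> V) :
  (2%:R : K) != 0 -> (3%:R : K) != 0 ->
  bilinear_prod mul -> admissible_poisson mul ->
  simple_alg mul -> ~ nilalgebra mul ->
  exists e : V, is_unit_element mul e.
Proof.
move=> two_neq0 three_neq0 mul_bilinear mul_admissible simple not_nil.
have [e ee e_neq0] := symprod_idempotent_of_not_nilalgebra
  two_neq0 three_neq0 mul_bilinear mul_admissible not_nil.
exists e; exact: unit_of_simple_idempotent
  two_neq0 three_neq0 mul_bilinear mul_admissible e ee e_neq0 simple.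
Qed.
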